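(* Let $(R,\mathfrak{m})$ satisfy condition $\bigstar$ with residue field $\mathbb{F}_q$, and suppose $\rho=\dim_{\mathbb{F}_q}\big(\mathfrak{m}/(\mathfrak{m}^2+pR)\big)$ is finite. Then the number of maximal subrings of $R$ with the same residue field as $R$ equals $\dfrac{q^{\rho}-1}{q-1}$ (in particular, it is $0$ when $\rho=0$).
   Context: All rings are commutative and unital. Condition $\bigstar$ on a ring $(R,\mathfrak{m})$: $R$ is a local ring (unique maximal ideal $\mathfrak{m}$, not necessarily Noetherian) of characteristic $p^N$ for a prime $p$ and some $N\ge 1$, with finite residue field $R/\mathfrak{m}\cong\mathbb{F}_q$, and $\mathfrak{m}$ is a nilpotent ideal. $\mathfrak{m}/(\mathfrak{m}^2+pR)$ is an $R/\mathfrak{m}$-vector space. A subring $S$ is local with $\mathfrak{m}_S=\mathfrak{m}\cap S$, its residue field naturally a subfield of $R/\mathfrak{m}$; a ''maximal subring with the same residue field as $R$'' is a proper subring with residue field $\mathbb{F}_q$ not properly contained in any other proper subring. *)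

From HB Require Import structures.
From mathcomp Require Import all_boot all_order all_algebra.
Set Implicit Arguments. Unset Strict Implicit. Unset Printing Implicit Defensive.
Import GRing.Theory.
Local Open Scope ring_scope.

Section Defs.
Variable R : comNzRingType.

(* subsets of R are Prop-valued predicates (R may be infinite). *)
Definition ideal (I : R -> Prop) : Prop :=
  I 0 /\ (forall x y, I x -> I y -> I (x + y)) /\ (forall r x, I x -> I (r * x)).

Definition proper_ideal (I : R -> Prop) : Prop := ideal I /\ ~ I 1.

Definition maximal_ideal (I : R -> Prop) : Prop :=
  proper_ideal I /\
  forall J, proper_ideal J -> (forall x, I x -> J x) -> forall x, J x -> I x.

Definition local_ring (m : R -> Prop) : Prop :=
  maximal_ideal m /\ forall J, maximal_ideal J -> forall x, J x <-> m x.

Definition has_char (n : nat) : Prop :=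
  (n%:R : R) = 0 /\ forall k : nat, (k%:R : R) = 0 -> (n %| k)%N.

(* R/m has exactly q elements: a system of q pairwise incongruent
   representatives covering all classes. *)
Definition residue_card (m : R -> Prop) (q : nat) : Prop :=
  exists reps : 'I_q -> R,
    (forall i j, m (reps i - reps j) -> i = j) /\
    (forall x, exists i, m (x - reps i)).

Definition nilpotent_ideal (m : R -> Prop) : Prop :=
  exists k : nat, forall a : 'I_k -> R, (forall i, m (a i)) -> \prod_i a i = 0.

Definition condition_star (p N q : nat) (m : R -> Prop) : Prop :=
  prime p /\ (0 < N)%N /\ has_char (p ^ N) /\ local_ring m /\
  residue_card m q /\ nilpotent_ideal m.

Definition in_m2_pR (p : nat) (m : R -> Prop) (y : R) : Prop :=
  exists (n : nat) (a b : 'I_n -> R) (r : R),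
    (forall i, m (a i) /\ m (b i)) /\ y = \sum_i a i * b i + p%:R * r.

(* dim_{R/m} m/(m^2+pR) = rho : there are rho elements of m whose classes
   form an R/m-basis of m/(m^2+pR) (scalars R/m represented by elements of R) *)
Definition cotangent_dim (p : nat) (m : R -> Prop) (rho : nat) : Prop :=
  exists x : 'I_rho -> R,
    (forall i, m (x i)) /\
    (forall y, m y -> exists c : 'I_rho -> R, in_m2_pR p m (y - \sum_i c i * x i)) /\
    (forall c : 'I_rho -> R, in_m2_pR p m (\sum_i c i * x i) -> forall i, m (c i)).

Definition subring (S : R -> Prop) : Prop :=
  S 1 /\ (forall x y, S x -> S y -> S (x - y)) /\ (forall x y, S x -> S y -> S (x * y)).

Definition proper_subring (S : R -> Prop) : Prop := subring S /\ exists x, ~ S x.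

(* the residue field S/(m ∩ S), viewed inside R/m, is all of R/m *)
Definition same_residue_field (m S : R -> Prop) : Prop :=
  forall x, exists s, S s /\ m (x - s).

Definition maximal_subring_same_residue (m S : R -> Prop) : Prop :=
  proper_subring S /\ same_residue_field m S /\
  forall T, proper_subring T -> (forall x, S x -> T x) -> forall x, T x -> S x.

(* the family P of subsets of R has exactly n members (up to extensional equality) *)
Definition exactly_n_members (P : (R -> Prop) -> Prop) (n : nat) : Prop :=
  exists f : 'I_n -> (R -> Prop),
    (forall i, P (f i)) /\
    (forall i j, (forall x, f i x <-> f j x) -> i = j) /\
    (forall S, P S -> exists i, forall x, S x <-> f i x).

End Defs.

(* Write J = m^2 + pR and F = R/m = F_q.  As q is a power of p, the map
   qdiff a = a - a^q takes values in m, is additive modulo J, vanishes modulo J on q-th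
   powers, agrees with the identity modulo J on m, and satisfies the Leibniz-type rule
   qdiff (ab) = b qdiff a + a^q qdiff b.  Composing it with coordinates m/J = F^rho, every
   nonzero linear form c on F^rho cuts out a subring S_c = {y | c(qdiff y) = 0}
   ([form_subring c]) with residue field F, and S_c is maximal.  Conversely, a maximal
   subring S with residue field F contains J (otherwise S + J = R, and nilpotency of m
   forces S = R as in Nakayama's lemma), hence all q-th powers; so the image of S /\ m in
   m/J is a proper subspace, some form c kills it, S is contained in S_c and thus equals it.
   Forms with the same kernel are proportional, so the maximal subrings are counted by the
   (q^rho - 1)/(q - 1) points of the projective space over F of dimension rho - 1. *)

From HB Require Import structures.
From mathcomp Require Import all_boot all_order all_algebra all_field.
From Stdlib Require Import Classical ClassicalEpsilon.
From mathcomp Require Import ring.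
Set Implicit Arguments. Unset Strict Implicit. Unset Printing Implicit Defensive.
Import GRing.Theory.
Local Open Scope ring_scope.

Section LinearForms.
Variables (K : fieldType) (n : nat).
Implicit Types (c u v : 'rV[K]_n).

Definition dotr c v : K := \sum_i c 0 i * v 0 i.

Lemma dotrD c u v : dotr c (u + v) = dotr c u + dotr c v.
Proof. by rewrite /dotr -big_split; apply: eq_bigr => i _; rewrite mxE mulrDr. Qed.

Lemma dotrZ c b v : dotr c (b *: v) = b * dotr c v.
Proof. by rewrite /dotr mulr_sumr; apply: eq_bigr => i _; rewrite mxE mulrCA. Qed.

Lemma dotrZl b c v : dotr (b *: c) v = b * dotr c v.
Proof. by rewrite /dotr mulr_sumr; apply: eq_bigr => i _; rewrite mxE mulrA. Qed.

Lemma dotr0 c : dotr c 0 = 0.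
Proof. by rewrite -(scale0r 0) dotrZ mul0r. Qed.

Lemma dotrB c u v : dotr c (u - v) = dotr c u - dotr c v.
Proof. by rewrite dotrD -scaleN1r dotrZ mulN1r. Qed.

Lemma dotr_delta c j : dotr c (delta_mx 0 j) = c 0 j.
Proof.
rewrite /dotr (bigD1 j) //= mxE !eqxx mulr1 big1 ?addr0 // => i /negPf ij.
by rewrite mxE ij andbF mulr0.
Qed.

Lemma row_neq0P v : reflect (exists j, v 0 j != 0) (v != 0).
Proof.
apply: (iffP idP) => [v0 | [j vj]]; last by apply: contraNneq vj => ->; rewrite mxE.
apply/existsP; apply: contraNT v0 => /existsPn v0; apply/eqP/rowP => j.
by rewrite mxE; apply/eqP/negPn.
Qed.

(* Projective points are represented by the vectors whose first nonzero entry is 1. *)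
Definition normalized c : bool :=
  [exists j, (c 0 j == 1) && [forall k : 'I_n, (k < j)%N ==> (c 0 k == 0)]].

Lemma normalized_neq0 c : normalized c -> c != 0.
Proof.
case/existsP => j /andP [/eqP cj _]; apply/row_neq0P; exists j.
by rewrite cj oner_eq0.
Qed.

Lemma normalizedZ v : v != 0 -> exists j, v 0 j != 0 /\ normalized ((v 0 j)^-1 *: v).
Proof.
move=> /row_neq0P [i0 vi0].
case: (@arg_minnP _ i0 (fun i => v 0 i != 0) (fun i : 'I_n => nat_of_ord i) vi0) => j vj minj.
exists j; split => //; apply/existsP; exists j; rewrite mxE mulVf // eqxx /=.
apply/forallP => k; apply/implyP => kj; rewrite mxE.
by apply: contraTT kj => /negPf; rewrite mulf_eq0 invr_eq0 (negPf vj) /= -leqNgt => /negbT /minj.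
Qed.

Lemma normalized_scale_eq1 c b : normalized c -> normalized (b *: c) -> b = 1.
Proof.
case/existsP => j /andP [/eqP cj /forallP cz].
case/existsP => j' /andP [/eqP cj' /forallP cz'].
move: cj'; rewrite mxE => cj'.
case: (ltngtP j j') => [jj' | j'j | /val_inj jj'].
- move: (implyP (cz' j) jj'); rewrite mxE cj mulr1 => /eqP b0.
  by move/eqP: cj'; rewrite b0 mul0r eq_sym oner_eq0.
- by move: (implyP (cz j') j'j) cj' => /eqP ->; rewrite mulr0 => /eqP; rewrite eq_sym oner_eq0.
- by move: cj'; rewrite -jj' cj mulr1.
Qed.

Lemma normalized_inj c c' : normalized c -> normalized c' ->
  (forall v, dotr c v = 0 <-> dotr c' v = 0) -> c = c'.
Proof.
move=> nc nc' ker_cc'.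
have [j /andP [/eqP cj _]] := existsP nc.
have c'E : c' = c' 0 j *: c.
  apply/rowP => k; rewrite mxE.
  pose v := delta_mx 0 k - c 0 k *: delta_mx 0 j : 'rV[K]_n.
  have /ker_cc' : dotr c v = 0 by rewrite dotrB dotrZ !dotr_delta cj mulr1 subrr.
  by rewrite dotrB dotrZ !dotr_delta => /eqP; rewrite subr_eq0 mulrC => /eqP.
have c'j : c' 0 j = 1 by apply: (normalized_scale_eq1 nc); rewrite -c'E.
by rewrite c'E c'j scale1r.
Qed.

End LinearForms.

Section FiniteLinearForms.
Variables (K : finFieldType) (n : nat).

Lemma proper_subspace_in_hyperplane (U : 'rV[K]_n -> Prop) :
  U 0 -> (forall u v, U u -> U v -> U (u + v)) -> (forall b u, U u -> U (b *: u)) ->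
  (exists v, ~ U v) -> exists c, normalized c /\ forall v, U v -> dotr c v = 0.
Proof.
move=> U0 UD UZ [v0 Uv0].
pose inU v : bool := excluded_middle_informative (U v).
have inUP v : reflect (U v) (inU v) by rewrite /inU; case: excluded_middle_informative; constructor.
pose Us := [set v | inU v].
pose A := \matrix_(i < #|Us|) (enum_val i : 'rV[K]_n).
have rowA i : U (row i A).
  by rewrite rowK; apply/inUP; have := enum_valP i; rewrite inE.
have rankA : (\rank A < n)%N.
  rewrite ltn_neqAle rank_leq_col andbT; apply: contra_notN Uv0 => /eqP rankA.
  have /row_fullP [B BA] : row_full A by rewrite /row_full rankA.
  have -> : v0 = (v0 *m B) *m A by rewrite -mulmxA BA mulmx1.
  by rewrite mulmx_sum_row; apply: (big_ind U) => // k _; apply/UZ/rowA.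
have kerA0 : kermx A^T != 0.
  by rewrite -mxrank_eq0 mxrank_ker mxrank_tr subn_eq0 -ltnNge.
have [i wi] : exists i, row i (kermx A^T) != 0.
  apply/existsP; apply: contraNT kerA0 => /existsPn kerA0.
  by apply/eqP/row_matrixP => i; rewrite row0; apply/eqP/negPn.
set w := row i (kermx A^T).
have wA : w *m A^T = 0 by apply/sub_kermxP; apply: row_sub.
have w_rowA k : dotr w (row k A) = 0.
  have := congr1 (fun M : 'rV_#|Us| => M 0 k) wA; rewrite !mxE => <-.
  by apply: eq_bigr => l _; rewrite !mxE.
have [j [wj nc]] := normalizedZ wi.
exists ((w 0 j)^-1 *: w); split => // v Uv.
have vU : v \in Us by rewrite inE; apply/inUP.
by rewrite dotrZl -(enum_rankK_in vU vU) -[enum_val _]rowK w_rowA mulr0.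
Qed.

Lemma card_normalized : (#|[set c : 'rV[K]_n | normalized c]| * #|K|.-1 = (#|K| ^ n).-1)%N.
Proof.
pose f (ac : K * 'rV[K]_n) := ac.1 *: ac.2.
pose D := setX [set~ (0 : K)] [set c : 'rV[K]_n | normalized c].
have f_inj : {in D &, injective f}.
  move=> [a c] [a' c']; rewrite !inE /= => /andP [a0 nc] /andP [a0' nc'] e.
  have c'E : c' = (a'^-1 * a) *: c by rewrite -scalerA [_ *: c]e scalerA mulVf // scale1r.
  have b1 : a'^-1 * a = 1 by apply: (normalized_scale_eq1 nc); rewrite -c'E.
  have aa' : a = a' by apply: (mulfI (invr_neq0 a0')); rewrite b1 mulVf.
  by rewrite c'E b1 scale1r aa'.
have fD : f @: D = [set~ 0].
  apply/setP => v; rewrite !inE; apply/imsetP/idP => [[[a c]] | v0].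
    rewrite !inE /= => /andP [a0 nc] ->.
    by rewrite /f /= scaler_eq0 negb_or a0 normalized_neq0.
  have [j [vj nc]] := normalizedZ v0.
  exists (v 0 j, (v 0 j)^-1 *: v); first by rewrite !inE vj.
  by rewrite /f /= scalerA mulfV // scale1r.
have := card_in_imset f_inj; rewrite fD cardsC1 cardsX cardsC1 card_mx mul1n => ->.
by rewrite mulnC.
Qed.

End FiniteLinearForms.

Section Ideals.
Variables (R : comNzRingType) (I : R -> Prop).
Hypothesis idI : ideal I.

Lemma ideal0 : I 0. Proof. by case: idI. Qed.

Lemma idealD a b : I a -> I b -> I (a + b).
Proof. by case: idI => _ [+ _]; apply. Qed.

Lemma idealMl r a : I a -> I (r * a).
Proof. by case: idI => _ [_]; apply. Qed.

Lemma idealMr r a : I a -> I (a * r).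
Proof. by rewrite mulrC; apply: idealMl. Qed.

Lemma idealN a : I a -> I (- a).
Proof. by rewrite -mulN1r; apply: idealMl. Qed.

Lemma idealB a b : I a -> I b -> I (a - b).
Proof. by move=> Ia /idealN; apply: idealD. Qed.

Lemma idealBC a b : I (a - b) -> I (b - a).
Proof. by rewrite -opprB => /idealN; rewrite opprK. Qed.

Lemma idealB_trans a b c : I (a - b) -> I (b - c) -> I (a - c).
Proof. by move=> Iab /(idealD Iab); rewrite addrA subrK. Qed.

Lemma ideal_sum (T : finType) (F : T -> R) : (forall i, I (F i)) -> I (\sum_i F i).
Proof. by move=> IF; apply: big_ind => //; [apply: ideal0 | apply: idealD]. Qed.

Lemma idealXX u v k : I (u - v) -> I (u ^+ k - v ^+ k).
Proof. by rewrite subrXX mulrC; apply: idealMl. Qed.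

Section Frobenius.
Variable p : nat.
Hypotheses (p_pr : prime p) (Ip : I p%:R).

Lemma ideal_frobenius a b : I ((a + b) ^+ p - (a ^+ p + b ^+ p)).
Proof.
have [p' pE] : exists p', p = p'.+1 by case: p p_pr => // p' _; exists p'.
rewrite pE exprDn big_ord_recr big_ord_recl /= subnn subn0 !expr0 binn bin0 !mulr1n.
rewrite mulr1 mul1r opprD addrACA subrr addr0 addrAC subrr add0r -pE.
apply: ideal_sum => i.
have /dvdnP [k ->] : (p %| 'C(p, bump 0 i))%N.
  by apply: prime_dvd_bin => //; rewrite /bump /= add1n pE ltnS ltn_ord.
by rewrite mulrnA -[_ *+ p]mulr_natl; apply: idealMr.
Qed.

Lemma ideal_frobeniusX a b k : I ((a + b) ^+ (p ^ k) - (a ^+ (p ^ k) + b ^+ (p ^ k))).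
Proof.
elim: k => [|k IHk]; first by rewrite !expn0 !expr1 subrr; apply: ideal0.
rewrite expnSr !exprM; apply: idealB_trans (ideal_frobenius _ _).
exact: idealXX.
Qed.

End Frobenius.
End Ideals.

Section Subrings.
Variables (R : comNzRingType) (S : R -> Prop).
Hypothesis subS : subring S.

Lemma subring1 : S 1. Proof. by case: subS. Qed.

Lemma subringB a b : S a -> S b -> S (a - b).
Proof. by case: subS => _ [+ _]; apply. Qed.

Lemma subringM a b : S a -> S b -> S (a * b).
Proof. by case: subS => _ [_]; apply. Qed.

Lemma subring0 : S 0.
Proof. by rewrite -(subrr 1); apply: subringB subring1 subring1. Qed.

Lemma subringD a b : S a -> S b -> S (a + b).
Proof.
move=> Sa Sb; rewrite -[b]opprK -[- b]sub0r.
exact: subringB Sa (subringB subring0 Sb).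
Qed.

Lemma subring_nat k : S k%:R.
Proof.
by elim: k => [|k IHk]; [exact: subring0 | rewrite -addn1 natrD; apply: subringD IHk subring1].
Qed.

Lemma subringX a k : S a -> S (a ^+ k).
Proof. by move=> Sa; elim: k => [|k IHk]; [exact: subring1 | rewrite exprS; apply: subringM]. Qed.

End Subrings.

Lemma subring_addI (R : comNzRingType) (S I : R -> Prop) : subring S -> ideal I ->
  subring (fun y => exists s z, S s /\ I z /\ y = s + z).
Proof.
move=> subS idI; split.
  exists 1, 0; rewrite addr0; split; first exact: (subring1 subS).
  by split=> //; apply: (ideal0 idI).
split=> _ _ [s [z [Ss [Iz ->]]]] [s' [z' [Ss' [Iz' ->]]]].
  exists (s - s'), (z - z'); split; first exact: (subringB subS Ss Ss').
  by split; [exact: (idealB idI Iz Iz') | rewrite opprD addrACA].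
exists (s * s'), (s * z' + z * s' + z * z'); split; first exact: (subringM subS Ss Ss').
split; last by ring.
apply: (idealD idI); last exact: (idealMr idI _ Iz).
by apply: (idealD idI); [apply: (idealMl idI) | apply: (idealMr idI)].
Qed.

Section LocalRing.
Variables (R : comNzRingType) (m : R -> Prop).
Hypothesis m_local : local_ring m.

Lemma local_ideal : ideal m. Proof. by case: m_local => [[[]]]. Qed.

Lemma local_not1 : ~ m 1. Proof. by case: m_local => [[[]]]. Qed.

Lemma local_unit a : ~ m a -> exists b, m (1 - a * b).
Proof.
move=> ma; apply: NNPP => no_inv; apply: ma.
pose I y := exists r t, m t /\ y = t + r * a.
have idI : ideal I.
  split; first by exists 0, 0; rewrite mul0r addr0; split=> //; apply: (ideal0 local_ideal).
  split=> [_ _ [r [t [mt ->]]] [r' [t' [mt' ->]]] | s _ [r [t [mt ->]]]].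
    exists (r + r'), (t + t'); split; last by rewrite mulrDl addrACA.
    exact: (idealD local_ideal mt mt').
  exists (s * r), (s * t); split; last by rewrite mulrDr mulrA.
  exact: (idealMl local_ideal _ mt).
have I1 : ~ I 1.
  by move=> [r [t [mt e]]]; apply: no_inv; exists r; rewrite e mulrC addrK.
case: m_local => [[_ m_max] _]; apply: (m_max I (conj idI I1)).
- by move=> y my; exists 0, y; rewrite mul0r addr0.
- by exists 1, 0; split; [apply: (ideal0 local_ideal) | rewrite mul1r add0r].
Qed.

Lemma local_prime a b : m (a * b) -> m a \/ m b.
Proof.
move=> mab; case: (classic (m a)) => [|/local_unit [c mc]]; [by left | right].
have -> : b = b * (1 - a * c) + c * (a * b) by ring.
exact: (idealD local_ideal (idealMl local_ideal _ mc) (idealMl local_ideal _ mab)).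
Qed.

Lemma local_rootX a k : m (a ^+ k.+1) -> m a.
Proof. by elim: k => [|k IHk]; rewrite ?expr1 // exprS => /local_prime [|/IHk]. Qed.

End LocalRing.

Section MaximalSubrings.
Variables (R : comNzRingType) (m : R -> Prop) (p q : nat).
Hypotheses (m_local : local_ring m) (p_pr : prime p) (m_p : m p%:R).
Variable reps : 'I_q -> R.
Hypotheses (reps_inj : forall i j, m (reps i - reps j) -> i = j)
  (reps_surj : forall y, exists i, m (y - reps i)).

Let m_ideal := local_ideal m_local.

Definition in_m y : bool := excluded_middle_informative (m y).

Lemma in_mP y : reflect (m y) (in_m y).
Proof. by rewrite /in_m; case: excluded_middle_informative; constructor. Qed.

Lemma in_m_idealr : idealr_closed in_m.
Proof.
split; [exact/in_mP/(ideal0 m_ideal) | exact/in_mP/(local_not1 m_local) |].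
move=> a u v /in_mP mu /in_mP mv; apply/in_mP.
exact: (idealD m_ideal (idealMl m_ideal a mu) mv).
Qed.

HB.instance Definition _ := isIdealr.Build R in_m in_m_idealr.

Definition m_idealr : idealr R := in_m.
Definition resf := {ideal_quot m_idealr}.
Local Open Scope quotient_scope.
HB.instance Definition _ := GRing.ComNzRing.on resf.
HB.instance Definition _ := EqQuotient.on resf.

Lemma resf_eq a b : \pi_resf a = \pi_resf b <-> m (a - b).
Proof.
split => [/eqP | mab]; first by rewrite -Quotient.idealrBE => /in_mP.
by apply/eqP; rewrite -Quotient.idealrBE; apply/in_mP.
Qed.

Lemma resf_eq0 a : \pi_resf a = 0 <-> m a.
Proof. by rewrite -(rmorph0 \pi_resf) resf_eq subr0. Qed.

Definition resf_inv (x : resf) : resf :=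
  if x == 0 then 0 else \pi_resf (epsilon (inhabits 0) (fun b => m (1 - repr x * b))).

Lemma resf_mulVf (x : resf) : x != 0 -> resf_inv x * x = 1.
Proof.
move=> /negPf x0; rewrite /resf_inv x0.
have nm : ~ m (repr x) by rewrite -resf_eq0 reprK; apply/eqP; rewrite x0.
have := epsilon_spec (inhabits 0) (fun b => m (1 - repr x * b)) (local_unit m_local nm).
set b := epsilon _ _ => mb.
rewrite -[x]reprK -rmorphM -(rmorph1 \pi_resf); apply/resf_eq.
by apply: (idealBC m_ideal); rewrite mulrC.
Qed.

Lemma resf_inv0 : resf_inv 0 = 0.
Proof. by rewrite /resf_inv eqxx. Qed.

HB.instance Definition _ := GRing.ComNzRing_isField.Build resf resf_mulVf resf_inv0.

Lemma reps_class (x : resf) : exists i, in_m (repr x - reps i).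
Proof. by have [i mi] := reps_surj (repr x); exists i; apply/in_mP. Qed.

Definition resf_index (x : resf) : 'I_q := xchoose (reps_class x).

Lemma resf_indexK : cancel resf_index (fun i => \pi_resf (reps i)).
Proof.
move=> x; rewrite -[RHS]reprK; apply/resf_eq.
by apply: (idealBC m_ideal); apply/in_mP; apply: xchooseP (reps_class x).
Qed.

HB.instance Definition _ := CanIsCountable resf_indexK.
HB.instance Definition _ : isFinite resf := CanIsFinite resf_indexK.

Lemma card_resf : #|{: resf}| = q.
Proof.
rewrite -(card_ord q); apply: bij_eq_card; exists (fun i => \pi_resf (reps i)) => //.
  exact: resf_indexK.
move=> i; apply: reps_inj; set x := \pi_resf (reps i).
have /in_mP mxi := xchooseP (reps_class x).
by apply: (idealB_trans m_ideal (idealBC m_ideal mxi)); apply/resf_eq; rewrite reprK.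
Qed.

Lemma m_expq a : m (a ^+ q - a).
Proof. by apply/resf_eq; rewrite rmorphXn /= -card_resf; apply: (@expf_card resf). Qed.

Lemma q_gt1 : (1 < q)%N.
Proof. by rewrite -card_resf finNzRing_gt1. Qed.

Lemma q_pow : q = (p ^ logn p q)%N.
Proof.
have pchar_p : p \in [pchar resf].
  by rewrite inE p_pr /=; apply/eqP; rewrite -(rmorph_nat \pi_resf); apply/resf_eq0.
by have := card_pprimeChar pchar_p; rewrite /pPrimeCharType card_resf.
Qed.

Local Notation J := (in_m2_pR p m).

Lemma ideal_J : ideal J.
Proof.
split.
  by exists 0%N, (fun _ => 0), (fun _ => 0), 0; rewrite big_ord0 mulr0 addr0; split=> //; case.
split=> [_ _ [k [a [b [r [mab ->]]]]] [k' [a' [b' [r' [mab' ->]]]]] | s _ [k [a [b [r [mab ->]]]]]].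
  pose cat (u : 'I_k -> R) (u' : 'I_k' -> R) i :=
    match split i with inl i => u i | inr i => u' i end.
  exists (k + k')%N, (cat a a'), (cat b b'), (r + r'); split.
    by move=> i; rewrite /cat; case: split => i'; [apply: mab | apply: mab'].
  rewrite big_split_ord mulrDr addrACA /cat; congr (_ + _ + _).
    by apply: eq_bigr => i _; rewrite (unsplitK (inl i)).
  by apply: eq_bigr => i _; rewrite (unsplitK (inr i)).
exists k, (fun i => s * a i), b, (s * r); split.
  move=> i; have [ma mb] := mab i; split => //; exact: (idealMl m_ideal s ma).
by rewrite mulrDr mulr_sumr mulrCA; congr (_ + _); apply: eq_bigr => i _; rewrite mulrA.
Qed.

Lemma J_sub_m y : J y -> m y.
Proof.
move=> [k [a [b [r [mab ->]]]]]; apply: (idealD m_ideal); last exact: (idealMr m_ideal _ m_p).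
by apply: (ideal_sum m_ideal) => i; exact: (idealMr m_ideal _ (mab i).1).
Qed.

Lemma J_mulm a b : m a -> m b -> J (a * b).
Proof.
by move=> ma mb; exists 1%N, (fun _ => a), (fun _ => b), 0; rewrite big_ord1 mulr0 addr0.
Qed.

Lemma J_p r : J (p%:R * r).
Proof. by exists 0%N, (fun _ => 0), (fun _ => 0), r; rewrite big_ord0 add0r; split=> //; case. Qed.

Lemma J_expqD a b : J ((a + b) ^+ q - (a ^+ q + b ^+ q)).
Proof.
have J_p1 := J_p 1; rewrite mulr1 in J_p1.
by rewrite q_pow; apply: (ideal_frobeniusX ideal_J p_pr J_p1).
Qed.

Lemma J_expqB a b : J ((a - b) ^+ q - (a ^+ q - b ^+ q)).
Proof.
have := idealN ideal_J (J_expqD (a - b) b); rewrite subrK.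
by congr J; ring.
Qed.

Lemma J_expq_m a : m a -> J (a ^+ q).
Proof.
move=> ma; have /subnK <- := q_gt1; rewrite addn2 exprSr exprS.
by apply: J_mulm => //; exact: (idealMr m_ideal _ ma).
Qed.

Lemma J_expq_congr a b : m (a - b) -> J (a ^+ q - b ^+ q).
Proof.
by move=> mab; have := idealB ideal_J (J_expq_m mab) (J_expqB a b); rewrite subKr.
Qed.

Definition qdiff (a : R) := a - a ^+ q.

Lemma qdiff_m a : m (qdiff a).
Proof. exact: (idealBC m_ideal (m_expq a)). Qed.

Lemma qdiffB a b : J (qdiff (a - b) - (qdiff a - qdiff b)).
Proof.
have -> : qdiff (a - b) - (qdiff a - qdiff b) = - ((a - b) ^+ q - (a ^+ q - b ^+ q)).
  by rewrite /qdiff; ring.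
exact: (idealN ideal_J (J_expqB a b)).
Qed.

Lemma qdiffM a b : qdiff (a * b) = b * qdiff a + a ^+ q * qdiff b.
Proof. by rewrite /qdiff exprMn; ring. Qed.

Lemma qdiff1 : qdiff 1 = 0.
Proof. by rewrite /qdiff expr1n subrr. Qed.

Lemma qdiff_expq a : J (qdiff (a ^+ q)).
Proof. exact: (idealBC ideal_J (J_expq_congr (m_expq a))). Qed.

Lemma qdiff_m_congr a : m a -> J (qdiff a - a).
Proof. by move=> ma; rewrite /qdiff addrAC subrr sub0r; exact: (idealN ideal_J (J_expq_m ma)). Qed.

Variables (rho : nat) (x : 'I_rho -> R).
Hypotheses (x_m : forall i, m (x i))
  (x_span : forall y, m y -> exists c : 'I_rho -> R, J (y - \sum_i c i * x i))
  (x_free : forall c : 'I_rho -> R, J (\sum_i c i * x i) -> forall i, m (c i)).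

Definition coeffs (y : R) : 'I_rho -> R :=
  epsilon (inhabits (fun _ => 0)) (fun c : 'I_rho -> R => J (y - \sum_i c i * x i)).

Definition coords (y : R) : 'rV[resf]_rho := \row_i \pi_resf (coeffs y i).

Lemma coeffsP y : m y -> J (y - \sum_i coeffs y i * x i).
Proof.
by move/x_span; apply: (epsilon_spec _ (fun c : 'I_rho -> R => J (y - \sum_i c i * x i))).
Qed.

Lemma coordsE y (c : 'I_rho -> R) :
  m y -> J (y - \sum_i c i * x i) -> coords y = \row_i \pi_resf (c i).
Proof.
move=> my Jc; apply/rowP => i; rewrite !mxE; apply/resf_eq.
apply: (x_free (c := fun i => coeffs y i - c i)).
have := idealB ideal_J Jc (coeffsP my); rewrite opprB addrC subrKA -sumrB.
by under eq_bigr do rewrite -mulrBl.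
Qed.

Lemma coordsD y z : m y -> m z -> coords (y + z) = coords y + coords z.
Proof.
move=> my mz; rewrite (@coordsE _ (fun i => coeffs y i + coeffs z i)).
- by apply/rowP => i; rewrite !mxE rmorphD.
- exact: (idealD m_ideal my mz).
under eq_bigr do rewrite mulrDl.
by rewrite big_split opprD addrACA; apply: (idealD ideal_J (coeffsP my) (coeffsP mz)).
Qed.

Lemma coordsZ r y : m y -> coords (r * y) = \pi_resf r *: coords y.
Proof.
move=> my; rewrite (@coordsE _ (fun i => r * coeffs y i)).
- by apply/rowP => i; rewrite !mxE rmorphM.
- exact: (idealMl m_ideal r my).
under eq_bigr do rewrite -mulrA.
by rewrite -mulr_sumr -mulrBr; apply: (idealMl ideal_J r (coeffsP my)).
Qed.

Lemma coordsB y z : m y -> m z -> coords (y - z) = coords y - coords z.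
Proof.
move=> my mz; have mNz := idealN m_ideal mz.
by rewrite coordsD // -[- z]mulN1r coordsZ // rmorphN rmorph1 scaleN1r.
Qed.

Lemma coords_J y : J y -> coords y = 0.
Proof.
move=> Jy; rewrite (@coordsE _ (fun _ => 0)).
- by apply/rowP => i; rewrite !mxE rmorph0.
- exact: J_sub_m.
- by rewrite big1 ?subr0 // => i _; rewrite mul0r.
Qed.

Lemma coords_eq0 y : m y -> coords y = 0 -> J y.
Proof.
move=> my y0; have m_coeffs i : m (coeffs y i).
  by apply/resf_eq0; have /rowP/(_ i) := y0; rewrite !mxE.
have := idealD ideal_J (coeffsP my) (ideal_sum ideal_J (fun i => J_mulm (m_coeffs i) (x_m i))).
by rewrite subrK.
Qed.

Lemma coords_congr y z : m y -> J (y - z) -> coords y = coords z.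
Proof.
move=> my Jyz; have mz : m z by rewrite -[z](subKr y); apply: (idealB m_ideal my (J_sub_m Jyz)).
by apply/eqP; rewrite -subr_eq0 -coordsB // coords_J.
Qed.

Lemma coords_basis j : coords (x j) = delta_mx 0 j.
Proof.
rewrite (@coordsE _ (fun i => (i == j)%:R)) //.
  by apply/rowP => i; rewrite !mxE rmorph_nat.
rewrite (bigD1 j) //= eqxx mul1r big1 ?addr0 ?subrr; first exact: (ideal0 ideal_J).
by move=> i /negPf ->; rewrite mul0r.
Qed.

Lemma coords_surj v : exists z, m z /\ coords z = v.
Proof.
have mz : m (\sum_i repr (v 0 i) * x i).
  by apply: (ideal_sum m_ideal) => i; apply: (idealMl m_ideal _ (x_m i)).
exists (\sum_i repr (v 0 i) * x i); split => //.
rewrite (@coordsE _ (fun i => repr (v 0 i))) //; last by rewrite subrr; apply: (ideal0 ideal_J).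
by apply/rowP => i; rewrite !mxE reprK.
Qed.

Lemma resf_expq a : \pi_resf (a ^+ q) = \pi_resf a.
Proof. exact/resf_eq/m_expq. Qed.

Lemma coords_qdiffB a b : coords (qdiff (a - b)) = coords (qdiff a) - coords (qdiff b).
Proof. by rewrite (coords_congr (qdiff_m _) (qdiffB a b)) coordsB //; apply: qdiff_m. Qed.

Lemma coords_qdiffM a b :
  coords (qdiff (a * b)) = \pi_resf b *: coords (qdiff a) + \pi_resf a *: coords (qdiff b).
Proof.
have [ma mb] := (qdiff_m a, qdiff_m b).
by rewrite qdiffM coordsD ?coordsZ ?resf_expq //; apply: (idealMl m_ideal).
Qed.

Lemma coords_qdiff_expq a : coords (qdiff (a ^+ q)) = 0.
Proof. exact/coords_J/qdiff_expq. Qed.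

Lemma coords_qdiff_m a : m a -> coords (qdiff a) = coords a.
Proof. by move=> ma; apply: coords_congr (qdiff_m a) _; apply: qdiff_m_congr. Qed.

Definition form_subring (c : 'rV[resf]_rho) (y : R) : Prop := dotr c (coords (qdiff y)) = 0.

Lemma form_subringP c : subring (form_subring c).
Proof.
rewrite /form_subring; split; first by rewrite qdiff1 coords_J ?dotr0 //; apply: (ideal0 ideal_J).
split=> a b ca cb; first by rewrite coords_qdiffB dotrB ca cb subrr.
by rewrite coords_qdiffM dotrD !dotrZ ca cb !mulr0 addr0.
Qed.

Lemma form_subring_expq c a : form_subring c (a ^+ q).
Proof. by rewrite /form_subring coords_qdiff_expq dotr0. Qed.

Lemma form_subring_m c a : m a -> form_subring c a <-> dotr c (coords a) = 0.
Proof. by move=> ma; rewrite /form_subring coords_qdiff_m. Qed.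

Lemma form_subring_residue c : same_residue_field m (form_subring c).
Proof.
move=> y; exists (y ^+ q); split; first exact: form_subring_expq.
exact: (idealBC m_ideal (m_expq y)).
Qed.

Lemma form_subring_proper c : c != 0 -> proper_subring (form_subring c).
Proof.
move=> /row_neq0P [j cj]; split; first exact: form_subringP.
by exists (x j); rewrite form_subring_m // coords_basis dotr_delta; apply/eqP.
Qed.

(* If [T] contains some [y] outside [form_subring c], then [c] does not vanish on
   [coords (qdiff y)]; subtracting a suitable [b^q * qdiff y] (which lies in [T]) moves any
   [qdiff w] into [form_subring c], so [T] contains every [w = qdiff w + w^q]. *)
Lemma form_subring_max c (T : R -> Prop) : proper_subring T ->
  (forall y, form_subring c y -> T y) -> forall y, T y -> form_subring c y.
Proof.
move=> [subT [w0 Tw0]] cT y Ty; apply: NNPP => cy; apply: Tw0.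
have Tq a : T (a ^+ q) by apply/cT/form_subring_expq.
have Tz : T (qdiff y) := subringB subT Ty (Tq y).
have {}cy : dotr c (coords (qdiff y)) != 0 by apply/eqP.
suff Tqdiff w : T (qdiff w).
  by rewrite -[w0](subrK (w0 ^+ q)); apply: (subringD subT (Tqdiff w0) (Tq w0)).
set b := repr (dotr c (coords (qdiff w)) / dotr c (coords (qdiff y))).
rewrite -[qdiff w](subrK (b ^+ q * qdiff y)).
apply: (subringD subT _ (subringM subT (Tq b) Tz)).
have mbz := idealMl m_ideal (b ^+ q) (qdiff_m y).
apply/cT/form_subring_m; first exact: (idealB m_ideal (qdiff_m w) mbz).
have [mw my] := (qdiff_m w, qdiff_m y).
by rewrite coordsB // coordsZ // dotrB dotrZ resf_expq reprK mulfVK ?subrr.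
Qed.

Inductive mpow : nat -> R -> Prop :=
  | mpow0 y : mpow 0 y
  | mpowM j a b : m a -> mpow j b -> mpow j.+1 (a * b)
  | mpowD j y z : mpow j y -> mpow j z -> mpow j (y + z).

Lemma mpow_ideal j : ideal (mpow j).
Proof.
split.
  by elim: j => [|j IHj]; [apply: mpow0 | rewrite -(mul0r 0); apply: mpowM (ideal0 m_ideal) IHj].
split=> [|r y]; first exact: mpowD.
elim=> {j y} [y | j a b ma _ IHb | j y z _ IHy _ IHz]; first exact: mpow0.
  by rewrite mulrCA; apply: mpowM IHb.
by rewrite mulrDr; apply: mpowD.
Qed.

Lemma mpow1 y : m y -> mpow 1 y.
Proof. by move=> my; rewrite -[y]mulr1; apply: mpowM (mpow0 _). Qed.

Lemma mpow_m j y : mpow j.+1 y -> m y.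
Proof.
move e : j.+1 => i mpy; elim: mpy j e => // [i' a b ma _ _ | i' u v _ IHu _ IHv] j e.
  exact: (idealMr m_ideal _ ma).
exact: (idealD m_ideal (IHu j e) (IHv j e)).
Qed.

Lemma mpow_mul i j u v : mpow i u -> mpow j v -> mpow (i + j) (u * v).
Proof.
move=> mpu mpv; elim: mpu => {i u} [u | i a b ma _ IHb | i y z _ IHy _ IHz].
- exact: (idealMl (mpow_ideal j)).
- by rewrite -mulrA addSn; apply: mpowM IHb.
- by rewrite mulrDl; apply: mpowD.
Qed.

Hypothesis m_nil : nilpotent_ideal m.

Lemma prod_m_eq0 : exists k, forall s : seq R,
  (forall a, a \in s -> m a) -> (k <= size s)%N -> \prod_(a <- s) a = 0.
Proof.
have [k m_k0] := m_nil; exists k => s ms ks.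
rewrite -(cat_take_drop k s) big_cat /= (big_nth 0) big_mkord size_takel //.
by rewrite m_k0 ?mul0r // => i; apply/ms/mem_take/mem_nth; rewrite size_takel.
Qed.

Lemma mpow_eq0 : exists k, forall j y, (k <= j)%N -> mpow j y -> y = 0.
Proof.
have [k m_k0] := prod_m_eq0; exists k.
suff mpow_prod j y : mpow j y -> forall s : seq R,
    (forall a, a \in s -> m a) -> (k <= j + size s)%N -> y * \prod_(a <- s) a = 0.
  by move=> j y kj /mpow_prod /(_ [::]); rewrite big_nil mulr1 addn0; apply.
elim=> {j y} [y | j a b ma _ IHb | j y z _ IHy _ IHz] s ms ks.
- by rewrite m_k0 ?mulr0.
- have -> : a * b * \prod_(c <- s) c = b * \prod_(c <- a :: s) c.
    by rewrite big_cons mulrCA mulrA.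
  apply: IHb => [c /predU1P [-> // | /ms //] |].
  by rewrite /= addnS -addSn.
- by rewrite mulrDl IHy ?IHz ?addr0.
Qed.

Section Nakayama.
Variable S : R -> Prop.
Hypotheses (subS : subring S) (S_J_cover : forall y, exists s z, S s /\ J z /\ y = s + z).

(* Since p lies in S, the p-part of J is absorbed into S up to p * J, which lies in m^2. *)
Lemma m_cover y : m y -> exists t w, S t /\ m t /\ mpow 2 w /\ y = t + w.
Proof.
move=> my; have [s [z [Ss [[k [a [b [r [mab ez]]]]] ey]]]] := S_J_cover y.
have [s' [z' [Ss' [Jz' er]]]] := S_J_cover r.
set w := \sum_i a i * b i + p%:R * z'.
have mpw : mpow 2 w.
  apply: (idealD (mpow_ideal 2)); last exact: (mpowM m_p (mpow1 (J_sub_m Jz'))).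
  by apply: (ideal_sum (mpow_ideal 2)) => i; apply: (mpowM (mab i).1 (mpow1 (mab i).2)).
have yE : y = s + p%:R * s' + w by rewrite ey ez er /w; ring.
exists (s + p%:R * s'), w; split.
  exact: (subringD subS Ss (subringM subS (subring_nat subS p) Ss')).
split=> //; have := idealB m_ideal my (mpow_m mpw).
by rewrite {1}yE addrK.
Qed.

Lemma mpow_cover j y : mpow j y -> (0 < j)%N -> exists s z, S s /\ mpow j.+1 z /\ y = s + z.
Proof.
elim=> {j y} [// | j a b ma mpb IHb | j y z _ IHy _ IHz] j_gt0.
- clear j_gt0; case: j mpb IHb => [_ _ | j mpb /(_ isT) [s [z [Ss [mpz eb]]]]].
    have [t [w [St [_ [mpw ->]]]]] := m_cover (idealMr m_ideal b ma).
    by exists t, w.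
  have [t [w [St [mt [mpw ->]]]]] := m_cover ma.
  exists (t * s), (t * z + w * b); split; first exact: (subringM subS St Ss).
  split; last by rewrite mulrDl {1}eb mulrDr addrA.
  by apply: mpowD; [apply: mpowM | apply: mpow_mul mpw mpb].
- have [s [u [Ss [mpu ->]]]] := IHy j_gt0; have [s' [u' [Ss' [mpu' ->]]]] := IHz j_gt0.
  exists (s + s'), (u + u'); split; first exact: (subringD subS Ss Ss').
  by split; [apply: mpowD | rewrite addrACA].
Qed.

Lemma subring_cover_eq y : S y.
Proof.
have [k mpow_k0] := mpow_eq0.
have m_cover_pow j z : m z -> exists s w, S s /\ mpow j.+1 w /\ z = s + w.
  elim: j z => [|j IHj] z mz.
    by exists 0, z; rewrite add0r; split; [exact: (subring0 subS) | split=> //; apply: mpow1].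
  have [s [w [Ss [mpw ->]]]] := IHj z mz.
  have [s' [w' [Ss' [mpw' ->]]]] := mpow_cover mpw isT.
  by exists (s + s'), w'; split; [exact: (subringD subS Ss Ss') | rewrite addrA].
have [s [z [Ss [Jz ->]]]] := S_J_cover y.
have [s' [w [Ss' [mpw ->]]]] := m_cover_pow k z (J_sub_m Jz).
by rewrite (mpow_k0 _ _ (leqnSn k) mpw) addr0; apply: (subringD subS Ss Ss').
Qed.

End Nakayama.

Lemma maximal_subring_J S : maximal_subring_same_residue m S -> forall y, J y -> S y.
Proof.
move=> [[subS [w Sw]] [_ S_max]].
pose SJ y := exists s z, S s /\ J z /\ y = s + z.
have subSJ : subring SJ := subring_addI subS ideal_J.
have S_SJ y : S y -> SJ y.
  by move=> Sy; exists y, 0; rewrite addr0; split=> //; split=> //; apply: (ideal0 ideal_J).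
have [[v SJv] | SJ_all] := classic (exists v, ~ SJ v).
  move=> y Jy; apply: (S_max SJ (conj subSJ (ex_intro _ v SJv)) S_SJ).
  by exists 0, y; rewrite add0r; split=> //; exact: (subring0 subS).
by case: Sw; apply: (subring_cover_eq subS) => y; apply: NNPP => SJy; apply: SJ_all; exists y.
Qed.

Definition coords_image (S : R -> Prop) (v : 'rV[resf]_rho) : Prop :=
  exists z, S z /\ m z /\ coords z = v.

Section ResidueSubring.
Variable S : R -> Prop.
Hypotheses (subS : subring S) (S_res : same_residue_field m S) (J_S : forall y, J y -> S y).

Lemma residue_subring_expq a : S (a ^+ q).
Proof.
have [s [Ss ms]] := S_res a; rewrite -[a ^+ q](subrK (s ^+ q)).
exact: (subringD subS (J_S (J_expq_congr ms)) (subringX subS _ Ss)).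
Qed.

Lemma coords_image0 : coords_image S 0.
Proof.
exists 0; split; first exact: (subring0 subS).
by split; [apply: (ideal0 m_ideal) | apply/coords_J/(ideal0 ideal_J)].
Qed.

Lemma coords_imageD u v : coords_image S u -> coords_image S v -> coords_image S (u + v).
Proof.
move=> [z [Sz [mz <-]]] [z' [Sz' [mz' <-]]]; exists (z + z').
split; first exact: (subringD subS Sz Sz').
by split; [exact: (idealD m_ideal mz mz') | rewrite coordsD].
Qed.

Lemma coords_imageZ b u : coords_image S u -> coords_image S (b *: u).
Proof.
move=> [z [Sz [mz <-]]]; exists (repr b ^+ q * z).
split; first exact: (subringM subS (residue_subring_expq _) Sz).
by split; [exact: (idealMl m_ideal _ mz) | rewrite coordsZ // resf_expq reprK].
Qed.

Lemma coords_image_proper : (exists w, ~ S w) -> exists v, ~ coords_image S v.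
Proof.
move=> [w Sw]; apply: NNPP => S_all; apply: Sw.
have Sm y : m y -> S y.
  move=> my; have [z [Sz [mz zy]]] : coords_image S (coords y).
    by apply: NNPP => Sy; apply: S_all; exists (coords y).
  rewrite -[y](subrK z); apply: (subringD subS _ Sz); apply/J_S/coords_eq0.
    exact: (idealB m_ideal my mz).
  by rewrite coordsB // zy subrr.
have [s [Ss ms]] := S_res w; rewrite -[w](subrK s).
exact: (subringD subS (Sm _ ms) Ss).
Qed.

End ResidueSubring.

Lemma maximal_subring_form S : maximal_subring_same_residue m S ->
  exists c, normalized c /\ forall y, S y <-> form_subring c y.
Proof.
move=> S_maxres; have J_S := maximal_subring_J S_maxres.
have [[subS notS] [S_res S_max]] := S_maxres.
have [c [nc c_S]] := proper_subspace_in_hyperplane (coords_image0 subS)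
  (coords_imageD subS) (coords_imageZ subS S_res J_S) (coords_image_proper subS S_res J_S notS).
have S_c y : S y -> form_subring c y.
  move=> Sy; apply: c_S; exists (qdiff y).
  split; first exact: (subringB subS Sy (residue_subring_expq subS S_res J_S y)).
  by split=> //; apply: qdiff_m.
exists c; split=> // y; split; first exact: S_c.
exact: (S_max _ (form_subring_proper (normalized_neq0 nc)) S_c).
Qed.

Lemma card_maximal_subrings :
  exactly_n_members (maximal_subring_same_residue m) ((q ^ rho - 1) %/ (q - 1)).
Proof.
set NS := [set c : 'rV[resf]_rho | normalized c].
have -> : ((q ^ rho - 1) %/ (q - 1) = #|NS|)%N.
  have := card_normalized resf rho; rewrite card_resf -/NS => card_NS.
  by rewrite !subn1 -card_NS mulnK // -subn1 subn_gt0 q_gt1.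
have NS_normalized (i : 'I_#|NS|) : normalized (enum_val i).
  by have := enum_valP i; rewrite inE.
exists (fun i => form_subring (enum_val i)); split; last split.
- move=> i; have c0 := normalized_neq0 (NS_normalized i).
  split; first exact: form_subring_proper.
  by split=> [|T]; [apply: form_subring_residue | apply: form_subring_max].
- move=> i j eq_ij; apply/enum_val_inj/normalized_inj => // v; have [z [mz <-]] := coords_surj v.
  by rewrite -!form_subring_m.
- move=> S /maximal_subring_form [c [nc Sc]]; have cNS : c \in NS by rewrite inE.
  by exists (enum_rank_in cNS c); rewrite enum_rankK_in.
Qed.

End MaximalSubrings.

Theorem corollary31 (R : comNzRingType) (p N q rho : nat) (m : R -> Prop) :
  condition_star p N q m ->
  cotangent_dim p m rho ->
  exactly_n_members (maximal_subring_same_residue m) ((q ^ rho - 1) %/ (q - 1)).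
Proof.
move=> [p_pr [N_gt0 [[charR _] [m_local [[reps [reps_inj reps_surj]] m_nil]]]]].
move=> [x [x_m [x_span x_free]]].
have m_p : m p%:R.
  case: N N_gt0 charR => // N _ charR; apply: (local_rootX m_local (k := N)).
  by rewrite -natrX charR; apply: (ideal0 (local_ideal m_local)).
exact: (card_maximal_subrings m_local p_pr m_p reps_inj reps_surj x_m x_span x_free m_nil).
Qed.
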